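(* Let $T>0$, $H_T=(0,T)\times(0,\infty)$, let $\tilde U\in C([0,T])$ with $\tilde U\le0$, and let $w_0\ge0$ be continuous on $[0,\infty)$. Let $w$ be a classical solution (continuous on $\overline{H_T}$, $C^1$ in $t$ and $C^2$ in $y$ in $H_T$) of $$\partial_tw-w^2+\partial_y^{-1}(w+\tilde U)\,\partial_yw-2\tilde Uw+\int_{+\infty}^yw\,dy'-\partial_y^2w=0\ \text{ in }H_T,$$ $$w|_{t=0}=w_0,\qquad w|_{y=0}=-\tilde U(t),\qquad \lim_{y\to+\infty}w=0,$$ such that $\sup_{H_T}|w(t,y)|e^{y}<\infty$ and $w(t,y)e^{y}\to0$ as $y\to+\infty$ uniformly in $t\in[0,T]$. Then $w\ge0$ in $H_T$.
   Context: $\partial_y^{-1}f(t,y):=\int_0^yf(t,y')dy'$. (In the paper $w=\tilde u-\tilde U$ with $\tilde u(t,y)=-\partial_xu(t,0,y)$, $\tilde U(t)=-\partial_xU(t,0)$ for a solution $u$ of the geophysical boundary layer problem.) *)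

From Stdlib Require Import Reals Lra.
Open Scope R_scope.

Definition in_HT_closed (T t y : R) : Prop := 0 <= t <= T /\ 0 <= y.
Definition in_HT (T t y : R) : Prop := 0 < t < T /\ 0 < y.

Definition continuous_on2 (D : R -> R -> Prop) (f : R -> R -> R) : Prop :=
  forall t y, D t y ->
    forall eps, 0 < eps -> exists delta, 0 < delta /\
      forall s z, D s z -> Rabs (s - t) < delta -> Rabs (z - y) < delta ->
        Rabs (f s z - f t y) < eps.

Definition continuous_on1 (D : R -> Prop) (g : R -> R) : Prop :=
  forall x, D x -> forall eps, 0 < eps -> exists delta, 0 < delta /\
    forall z, D z -> Rabs (z - x) < delta -> Rabs (g z - g x) < eps.

Definition integral_eq (f : R -> R) (a b l : R) : Prop :=
  exists pr : Riemann_integrable f a b, RiemannInt pr = l.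

Definition improper_integral_eq (f : R -> R) (a l : R) : Prop :=
  forall eps, 0 < eps -> exists M, forall b, M <= b ->
    exists I, integral_eq f a b I /\ Rabs (I - l) < eps.

From Stdlib Require Import Reals Lra ClassicalEpsilon.
From Coquelicot Require Import Coquelicot.
Open Scope R_scope.

(* Suppose w < 0 somewhere and weight it: z = w e^(y - lam t) with lam = |C| + 3, where C
   bounds |w| e^y.  As z decays when y -> oo and is nonnegative for t = 0 and for y = 0,
   it attains a negative minimum over [0,t0] x [0,oo) at an interior point (t0, y0).
   There w_t <= lam w, w_y = -w and w_yy >= w; moreover int_0^y0 (w + U) <= |C|, and
   int_y0^oo w >= w(t0,y0) because w e^y >= w(t0,y0) e^y0 for y >= y0.  Inserting all
   this into the equation gives w_t >= w^2 + (|C| + 2) w > lam w, a contradiction. *)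

Lemma derive_nonpos_of_left_min (f : R -> R) x l r :
  derivable_pt_lim f x l -> 0 < r ->
  (forall s, x - r < s < x -> f x <= f s) -> l <= 0.
Proof.
  intros Hd Hr Hmin. apply Rnot_lt_le; intros Hl.
  destruct (Hd l Hl) as [[d Hd0] Hq]; simpl in Hq.
  set (h := - (Rmin d r / 2)).
  assert (Hmd := Rmin_l d r). assert (Hmr := Rmin_r d r).
  assert (Hm0 : 0 < Rmin d r) by (apply Rmin_pos; lra).
  assert (Hh : h < 0) by (unfold h; lra).
  assert (Hx := Hmin (x + h) ltac:(unfold h; lra)).
  specialize (Hq h (Rlt_not_eq _ _ Hh) ltac:(rewrite Rabs_left; unfold h; lra)).
  apply Rabs_def2 in Hq. destruct Hq as [_ Hq].
  assert (Hdiff : (f (x + h) - f x) / h * h = f (x + h) - f x) by (field; lra).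
  nra.
Qed.

Lemma derivable_pt_lim_reflect (f : R -> R) x l :
  derivable_pt_lim f x l -> derivable_pt_lim (fun s => f (- s)) (- x) (- l).
Proof.
  intros Hd. replace (- l) with (l * - (1)) by ring.
  apply (derivable_pt_lim_comp Ropp f).
  - apply derivable_pt_lim_opp, derivable_pt_lim_id.
  - rewrite Ropp_involutive. exact Hd.
Qed.

Lemma derive_nonneg_of_right_min (f : R -> R) x l r :
  derivable_pt_lim f x l -> 0 < r ->
  (forall s, x < s < x + r -> f x <= f s) -> 0 <= l.
Proof.
  intros Hd Hr Hmin.
  enough (- l <= 0) by lra.
  apply (derive_nonpos_of_left_min _ _ _ r (derivable_pt_lim_reflect f x l Hd) Hr).
  intros s Hs. rewrite Ropp_involutive. apply Hmin. lra.
Qed.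

Lemma derive_eq0_of_local_min (f : R -> R) x l r :
  derivable_pt_lim f x l -> 0 < r ->
  (forall s, x - r < s < x + r -> f x <= f s) -> l = 0.
Proof.
  intros Hd Hr Hmin. apply Rle_antisym.
  - apply (derive_nonpos_of_left_min f x l r); auto. intros s Hs; apply Hmin; lra.
  - apply (derive_nonneg_of_right_min f x l r); auto. intros s Hs; apply Hmin; lra.
Qed.

Lemma second_derive_nonneg_of_local_min (f f' : R -> R) x l r : 0 < r ->
  (forall s, x - r < s < x + r -> derivable_pt_lim f s (f' s)) ->
  derivable_pt_lim f' x l ->
  (forall s, x - r < s < x + r -> f x <= f s) -> 0 <= l.
Proof.
  intros Hr Hd Hd2 Hmin. apply Rnot_lt_le; intros Hl.
  assert (Hf'0 : f' x = 0) by (apply (derive_eq0_of_local_min f x _ r); auto; apply Hd; lra).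
  destruct (Hd2 (- l) ltac:(lra)) as [[d Hd0] Hq]; simpl in Hq.
  set (h := Rmin d r / 2).
  assert (Hmd := Rmin_l d r). assert (Hmr := Rmin_r d r).
  assert (Hm0 : 0 < Rmin d r) by (apply Rmin_pos; lra).
  destruct (MVT_cor2 f f' x (x + h)) as [c [Hmvt Hc]]; [unfold h; lra | |].
  { intros c Hc. apply Hd. unfold h in Hc; lra. }
  specialize (Hq (c - x) ltac:(lra) ltac:(rewrite Rabs_right; unfold h in *; lra)).
  replace (x + (c - x)) with c in Hq by ring. rewrite Hf'0 in Hq.
  apply Rabs_def2 in Hq. destruct Hq as [Hq _].
  assert (Hdiff : (f' c - 0) / (c - x) * (c - x) = f' c) by (field; lra).
  assert (Hx := Hmin (x + h) ltac:(unfold h; lra)).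
  assert (f' c < 0) by nra.
  unfold h in *; nra.
Qed.

Lemma derivable_pt_lim_exp_affine a b x :
  derivable_pt_lim (fun s => exp (b + a * s)) x (a * exp (b + a * x)).
Proof. apply is_derive_Reals. auto_derive; auto; ring. Qed.

Lemma derivable_pt_lim_mult_exp_affine (f : R -> R) a b x l :
  derivable_pt_lim f x l ->
  derivable_pt_lim (fun s => f s * exp (b + a * s)) x ((l + a * f x) * exp (b + a * x)).
Proof.
  intros Hd.
  replace ((l + a * f x) * exp (b + a * x))
    with (l * exp (b + a * x) + f x * (a * exp (b + a * x))) by ring.
  apply (derivable_pt_lim_mult f (fun s => exp (b + a * s))); auto.
  apply derivable_pt_lim_exp_affine.
Qed.

Lemma derive_le_of_left_min_weighted (f : R -> R) x l b lam r :
  derivable_pt_lim f x l -> 0 < r ->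
  (forall s, x - r < s < x -> f x * exp (b - lam * x) <= f s * exp (b - lam * s)) ->
  l <= lam * f x.
Proof.
  intros Hd Hr Hmin.
  assert (H := derive_nonpos_of_left_min _ _ _ r
    (derivable_pt_lim_mult_exp_affine f (- lam) b x l Hd) Hr).
  assert (He := exp_pos (b + - lam * x)).
  enough ((l + - lam * f x) * exp (b + - lam * x) <= 0) by nra.
  apply H. intros s Hs.
  replace (b + - lam * x) with (b - lam * x) by ring.
  replace (b + - lam * s) with (b - lam * s) by ring. auto.
Qed.

Lemma derive_of_local_min_weighted (f f' : R -> R) x f'' c r : 0 < r ->
  (forall s, x - r < s < x + r -> derivable_pt_lim f s (f' s)) ->
  derivable_pt_lim f' x f'' ->
  (forall s, x - r < s < x + r -> f x * exp (x - c) <= f s * exp (s - c)) ->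
  f' x = - f x /\ f x <= f''.
Proof.
  intros Hr Hd Hd2 Hmin0.
  set (b := - c). set (e := fun s => exp (b + 1 * s)).
  assert (Hmin : forall s, x - r < s < x + r -> f x * e x <= f s * e s).
  { intros s Hs. unfold e, b. replace (- c + 1 * x) with (x - c) by ring.
    replace (- c + 1 * s) with (s - c) by ring. auto. }
  assert (He := exp_pos (b + 1 * x)).
  assert (Hd1 : forall s, x - r < s < x + r ->
    derivable_pt_lim (fun s => f s * e s) s ((f' s + 1 * f s) * e s)).
  { intros s Hs. apply derivable_pt_lim_mult_exp_affine, Hd, Hs. }
  assert (Hdf' : derivable_pt_lim (fun s => f' s + 1 * f s) x (f'' + 1 * f' x)).
  { apply derivable_pt_lim_plus; auto.
    apply derivable_pt_lim_scal, Hd; lra. }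
  assert (H1 := derive_eq0_of_local_min _ x _ r (Hd1 x ltac:(lra)) Hr Hmin).
  assert (H2 := second_derive_nonneg_of_local_min _ _ x _ r Hr Hd1
    (derivable_pt_lim_mult_exp_affine _ 1 b x _ Hdf') Hmin).
  unfold e in *. split; nra.
Qed.

Lemma continuity_2d_pt_section (z : R -> R -> R) t y :
  continuity_2d_pt z t y -> continuity_pt (fun v => z t v) y.
Proof.
  intros Hz. apply continuity_pt_locally. intros eps.
  destruct (Hz eps) as [d Hd]. exists d. intros v Hv. apply Hd; auto.
  rewrite Rminus_diag, Rabs_R0. apply cond_pos.
Qed.

Lemma Rabs_min_values_lt (f g : R -> R) c d yf yg eps :
  c <= yf <= d -> c <= yg <= d ->
  (forall y, c <= y <= d -> f yf <= f y) -> (forall y, c <= y <= d -> g yg <= g y) ->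
  (forall y, c <= y <= d -> Rabs (f y - g y) < eps) ->
  Rabs (f yf - g yg) < eps.
Proof.
  intros Hyf Hyg Hf Hg Hfg.
  assert (H1 := Hfg yf Hyf). assert (H2 := Hfg yg Hyg).
  assert (H3 := Hf yg Hyg). assert (H4 := Hg yf Hyf).
  apply Rabs_def2 in H1. apply Rabs_def2 in H2. apply Rabs_def1; lra.
Qed.

(* Minimise first in [y] (choosing a minimiser [m t] for each [t]), then in [t]: the
   partial minimum [t |-> z t (m t)] is continuous by uniform continuity of [z]. *)
Lemma continuity_2d_rectangle_min (z : R -> R -> R) a b c d : a <= b -> c <= d ->
  (forall t y, continuity_2d_pt z t y) ->
  exists t0 y0, a <= t0 <= b /\ c <= y0 <= d /\
    forall t y, a <= t <= b -> c <= y <= d -> z t0 y0 <= z t y.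
Proof.
  intros Hab Hcd Hz.
  assert (Hsec : forall t, exists y, c <= y <= d /\ forall y', c <= y' <= d -> z t y <= z t y').
  { intros t. destruct (continuity_ab_min (fun y => z t y) c d Hcd) as [y [Hy1 Hy2]].
    - intros y _. apply continuity_2d_pt_section, Hz.
    - exists y; auto. }
  destruct (choice _ Hsec) as [m Hm].
  assert (Hcont : forall t, continuity_pt (fun t => z t (m t)) t).
  { intros t. apply continuity_pt_locally. intros eps.
    destruct (uniform_continuity_2d z (t - 1) (t + 1) c d (fun x y _ _ => Hz x y) eps)
      as [delta Hdelta].
    exists (mkposreal _ (Rmin_pos delta 1 (cond_pos delta) Rlt_0_1)).
    intros s Hs. change (Rabs (s - t) < Rmin delta 1) in Hs.
    assert (Hs1 := Rmin_l delta 1). assert (Hs2 := Rmin_r delta 1).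
    destruct (Hm s) as [Hms1 Hms2]. destruct (Hm t) as [Hmt1 Hmt2].
    apply (Rabs_min_values_lt (z s) (z t) c d); auto.
    intros y Hy. apply Rabs_def2 in Hs.
    apply Hdelta; try lra. apply Rabs_def1; lra.
    rewrite Rminus_diag, Rabs_R0. apply cond_pos. }
  destruct (continuity_ab_min (fun t => z t (m t)) a b Hab (fun t _ => Hcont t))
    as [t0 [Ht0 Ht0ab]].
  exists t0, (m t0). split; auto. split; [apply Hm |].
  intros t y Ht Hy. apply Rle_trans with (z t (m t)); auto. apply Hm; auto.
Qed.

Lemma Rabs_clamp_le T u x : 0 <= T ->
  Rabs (Rmax 0 (Rmin T u) - Rmax 0 (Rmin T x)) <= Rabs (u - x).
Proof.
  intros HT. unfold Rmax, Rmin.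
  repeat destruct Rle_dec; unfold Rabs; repeat destruct Rcase_abs; lra.
Qed.

Lemma Rabs_Rmax0_le u x : Rabs (Rmax 0 u - Rmax 0 x) <= Rabs (u - x).
Proof.
  unfold Rmax. repeat destruct Rle_dec; unfold Rabs; repeat destruct Rcase_abs; lra.
Qed.

Lemma in_HT_closed_clamp T t y : 0 <= T -> in_HT_closed T (Rmax 0 (Rmin T t)) (Rmax 0 y).
Proof.
  intros HT. split; [split |].
  - apply Rmax_l.
  - apply Rmax_lub; [lra | apply Rmin_l].
  - apply Rmax_l.
Qed.

Lemma continuity_2d_pt_clamp T (w : R -> R -> R) t y : 0 <= T ->
  continuous_on2 (in_HT_closed T) w ->
  continuity_2d_pt (fun s v => w (Rmax 0 (Rmin T s)) (Rmax 0 v)) t y.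
Proof.
  intros HT Hw eps.
  destruct (Hw _ _ (in_HT_closed_clamp T t y HT) eps (cond_pos eps)) as [d [Hd Hwd]].
  exists (mkposreal d Hd). intros s v Hs Hv. simpl in Hs, Hv.
  apply Hwd; [apply in_HT_closed_clamp; auto | |].
  - eapply Rle_lt_trans; [apply Rabs_clamp_le; auto | auto].
  - eapply Rle_lt_trans; [apply Rabs_Rmax0_le | auto].
Qed.

Lemma continuity_2d_pt_exp_weight lam t y :
  continuity_2d_pt (fun s v => exp (v - lam * s)) t y.
Proof.
  apply (continuity_1d_2d_pt_comp exp (fun s v => v - lam * s)).
  - apply derivable_continuous_pt, derivable_pt_exp.
  - apply continuity_2d_pt_minus; [apply continuity_2d_pt_id2 |].
    apply continuity_2d_pt_mult; [apply continuity_2d_pt_const | apply continuity_2d_pt_id1].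
Qed.

Lemma exp_neg_le_1 x : 0 <= x -> exp (- x) <= 1.
Proof.
  intros Hx. rewrite <- exp_0. destruct (Req_dec x 0) as [-> | Hx0].
  - rewrite Ropp_0. lra.
  - apply Rlt_le, exp_increasing. lra.
Qed.

Lemma le_exp_neg_of_Rabs_mul_exp_le v x C : Rabs v * exp x <= C -> v <= C * exp (- x).
Proof.
  intros Hv. rewrite exp_Ropp.
  assert (He := exp_pos x). assert (Hva := Rle_abs v).
  apply (Rmult_le_reg_r (exp x)); auto.
  rewrite Rmult_assoc, Rinv_l by lra. nra.
Qed.

Lemma exp_weighted_le_cancel a b p q c :
  a * exp (p - c) <= b * exp (q - c) -> a * exp p * exp (- q) <= b.
Proof.
  intros H. unfold Rminus in H. rewrite !exp_plus in H.
  assert (Hc := exp_pos (- c)). assert (Hq := exp_pos q).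
  apply (Rmult_le_reg_r (exp q * exp (- c))); [apply Rmult_lt_0_compat; auto |].
  assert (Hqq : exp (- q) * exp q = 1) by (rewrite <- exp_plus, Rplus_opp_l; apply exp_0).
  replace (a * exp p * exp (- q) * (exp q * exp (- c)))
    with (a * (exp p * exp (- c)) * (exp (- q) * exp q)) by ring.
  rewrite Hqq. lra.
Qed.

Lemma integral_eq_exp_neg K a b : a <= b ->
  integral_eq (fun x => K * exp (- x)) a b (K * (exp (- a) - exp (- b))).
Proof.
  intros Hab.
  assert (Hc : forall x, continuity_pt (fun x => K * exp (- x)) x).
  { intros x. apply derivable_continuous_pt.
    apply derivable_pt_scal, derivable_pt_comp; [apply derivable_pt_opp, derivable_pt_id |].
    apply derivable_pt_exp. }
  exists (continuity_implies_RiemannInt Hab (fun x _ => Hc x)).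
  rewrite <- RInt_Reals. apply is_RInt_unique.
  replace (K * (exp (- a) - exp (- b))) with (minus (- K * exp (- b)) (- K * exp (- a)))
    by (unfold minus, plus, opp; simpl; ring).
  apply (is_RInt_derive (fun x => - K * exp (- x))).
  - intros x _. auto_derive; auto. ring.
  - intros x _. apply continuity_pt_filterlim, Hc.
Qed.

Lemma integral_eq_le (f g : R -> R) a b I J : a <= b ->
  (forall x, a < x < b -> f x <= g x) ->
  integral_eq f a b I -> integral_eq g a b J -> I <= J.
Proof.
  intros Hab Hfg [prf <-] [prg <-]. apply RiemannInt_P19; auto.
Qed.

Lemma integral_eq_le_of_Rabs_mul_exp_le (f : R -> R) u C y A : 0 <= y -> u <= 0 ->
  (forall x, 0 < x < y -> Rabs (f x) * exp x <= C) ->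
  integral_eq (fun x => f x + u) 0 y A -> A <= Rabs C.
Proof.
  intros Hy Hu Hf HA.
  assert (Hle : forall x, 0 < x < y -> f x + u <= C * exp (- x)).
  { intros x Hx. assert (H := le_exp_neg_of_Rabs_mul_exp_le _ _ _ (Hf x Hx)). lra. }
  assert (HAC := integral_eq_le _ _ _ _ _ _ Hy Hle HA (integral_eq_exp_neg C 0 y Hy)).
  rewrite Ropp_0, exp_0 in HAC.
  assert (He := exp_pos (- y)). assert (HC := Rle_abs C). assert (HC' := Rabs_pos C).
  assert (He1 := exp_neg_le_1 y Hy).
  nra.
Qed.

(* For [K <= 0] every truncated integral of [K e^(-x)] from [a] is at least [K e^(-a)]. *)
Lemma improper_integral_ge_of_exp_bound (f : R -> R) a K B : K <= 0 ->
  (forall x, a < x -> K * exp (- x) <= f x) -> improper_integral_eq f a B ->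
  K * exp (- a) <= B.
Proof.
  intros HK Hf HB. apply Rnot_lt_le; intros Hlt.
  destruct (HB (K * exp (- a) - B) ltac:(lra)) as [M HM].
  destruct (HM (Rmax M a) (Rmax_l M a)) as [I [HI HIB]].
  assert (Hle := integral_eq_le _ _ _ _ _ _ (Rmax_r M a) (fun x Hx => Hf x (proj1 Hx))
    (integral_eq_exp_neg K a (Rmax M a) (Rmax_r M a)) HI).
  assert (He := exp_pos (- Rmax M a)).
  apply Rabs_def2 in HIB. nra.
Qed.

Lemma improper_integral_ge_of_weighted_min (f : R -> R) a c W B : W <= 0 ->
  (forall x, a < x -> W * exp (a - c) <= f x * exp (x - c)) ->
  improper_integral_eq f a B -> W <= B.
Proof.
  intros HW Hmin HB.
  replace W with (W * exp a * exp (- a)) by (rewrite exp_Ropp; field; apply Rgt_not_eq, exp_pos).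
  apply (improper_integral_ge_of_exp_bound f); [| | exact HB].
  - assert (H := exp_pos a). nra.
  - intros x Hx. apply (exp_weighted_le_cancel _ _ _ _ c), Hmin, Hx.
Qed.

Lemma weighted_gt_of_Rabs_lt v y k mu : 0 <= k -> Rabs v * exp y < mu ->
  - mu < v * exp (y - k).
Proof.
  intros Hk Hv. unfold Rminus. rewrite exp_plus.
  assert (Hey := exp_pos y). assert (Hek := exp_pos (- k)).
  assert (Hek1 := exp_neg_le_1 k Hk).
  assert (Hva := Rle_abs (- v)). rewrite Rabs_Ropp in Hva.
  assert (0 <= Rabs v * exp y) by (apply Rmult_le_pos; [apply Rabs_pos | lra]).
  assert (- (Rabs v * exp y) <= v * exp y) by nra.
  nra.
Qed.

Lemma exists_weighted_negative_min T (w : R -> R -> R) lam t1 y1 :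
  0 <= lam -> continuous_on2 (in_HT_closed T) w ->
  (forall y, 0 <= y -> 0 <= w 0 y) -> (forall t, 0 <= t <= T -> 0 <= w t 0) ->
  (forall eps, 0 < eps -> exists M, forall t y, 0 <= t <= T -> M <= y ->
     Rabs (w t y) * exp y < eps) ->
  0 <= t1 <= T -> 0 <= y1 -> w t1 y1 < 0 ->
  exists t0 y0, 0 < t0 <= t1 /\ 0 < y0 /\ w t0 y0 < 0 /\
    forall s y, 0 <= s <= t1 -> 0 <= y ->
      w t0 y0 * exp (y0 - lam * t0) <= w s y * exp (y - lam * s).
Proof.
  intros Hlam Hwc Hinit Hbd Hdecay Ht1 Hy1 Hneg.
  (* [continuity_2d_pt] is continuity on all of R^2, so extend [w] by clamping. *)
  set (z := fun s y => w (Rmax 0 (Rmin T s)) (Rmax 0 y) * exp (y - lam * s)).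
  assert (Hz : forall s y, 0 <= s <= T -> 0 <= y -> z s y = w s y * exp (y - lam * s)).
  { intros s y Hs Hy. unfold z.
    rewrite (Rmin_right T s), (Rmax_right 0 s), (Rmax_right 0 y) by lra. reflexivity. }
  assert (Hzc : forall s y, continuity_2d_pt z s y).
  { intros s y. apply continuity_2d_pt_mult;
      [apply continuity_2d_pt_clamp; [lra | exact Hwc] | apply continuity_2d_pt_exp_weight]. }
  assert (Hpos : forall s y, 0 <= w s y -> 0 <= w s y * exp (y - lam * s)).
  { intros s y Hw. apply Rmult_le_pos; [auto | apply Rlt_le, exp_pos]. }
  assert (Hz1 : z t1 y1 < 0).
  { rewrite Hz by lra. assert (He := exp_pos (y1 - lam * t1)). nra. }
  destruct (Hdecay (- z t1 y1) ltac:(lra)) as [M HM].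
  assert (HY := Rmax_r M y1). assert (HYM := Rmax_l M y1).
  destruct (continuity_2d_rectangle_min z 0 t1 0 (Rmax M y1) ltac:(lra) ltac:(lra) Hzc)
    as [t0 [y0 [Ht0 [Hy0 Hmin]]]].
  assert (Hmin1 := Hmin t1 y1 ltac:(lra) ltac:(lra)).
  rewrite Hz in Hmin by lra. rewrite Hz in Hmin1 by lra.
  exists t0, y0. split; [| split; [| split]].
  - split; [| lra]. destruct (Req_dec t0 0) as [-> | ?]; [| lra].
    assert (H := Hpos 0 y0 (Hinit y0 ltac:(lra))). lra.
  - destruct (Req_dec y0 0) as [-> | ?]; [| lra].
    assert (H := Hpos t0 0 (Hbd t0 ltac:(lra))). lra.
  - assert (He := exp_pos (y0 - lam * t0)). nra.
  - intros s y Hs Hy. destruct (Rle_or_lt y (Rmax M y1)) as [HyY | HyY].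
    { rewrite <- (Hz s y) by lra. apply Hmin; lra. }
    assert (Htail := HM s y ltac:(lra) ltac:(lra)).
    assert (H := weighted_gt_of_Rabs_lt (w s y) y (lam * s) _ ltac:(nra) Htail).
    lra.
Qed.

Theorem lemma3p2
  (T : R) (U w0 : R -> R)
  (w : R -> R -> R)
  (wt wy wyy : R -> R -> R) :
  0 < T ->
  continuous_on1 (fun t => 0 <= t <= T) U ->
  (forall t, 0 <= t <= T -> U t <= 0) ->
  continuous_on1 (fun y => 0 <= y) w0 ->
  (forall y, 0 <= y -> 0 <= w0 y) ->
  continuous_on2 (in_HT_closed T) w ->
  (forall t y, in_HT T t y -> derivable_pt_lim (fun s => w s y) t (wt t y)) ->
  (forall t y, in_HT T t y -> derivable_pt_lim (fun z => w t z) y (wy t y)) ->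
  (forall t y, in_HT T t y -> derivable_pt_lim (fun z => wy t z) y (wyy t y)) ->
  continuous_on2 (in_HT T) wt ->
  continuous_on2 (in_HT T) wy ->
  continuous_on2 (in_HT T) wyy ->
  (forall t y, in_HT T t y ->
     exists A B,
       integral_eq (fun z => w t z + U t) 0 y A /\
       improper_integral_eq (fun z => w t z) y B /\
       wt t y - (w t y) ^ 2 + A * wy t y - 2 * U t * w t y + (- B) - wyy t y = 0) ->
  (forall y, 0 <= y -> w 0 y = w0 y) ->
  (forall t, 0 <= t <= T -> w t 0 = - U t) ->
  (forall t, 0 <= t <= T -> forall eps, 0 < eps -> exists M, forall y, M <= y ->
       Rabs (w t y) < eps) ->
  (exists C, forall t y, in_HT T t y -> Rabs (w t y) * exp y <= C) ->
  (forall eps, 0 < eps -> exists M, forall t y, 0 <= t <= T -> M <= y ->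
       Rabs (w t y) * exp y < eps) ->
  forall t y, in_HT T t y -> 0 <= w t y.
Proof.
  intros _ _ HU _ Hw0 Hwc Hwt Hwy Hwyy _ _ _ Heq Hinit Hbd _ [C HC] Hdecay t1 y1 [Ht1 Hy1].
  apply Rnot_lt_le; intros Hneg.
  set (lam := Rabs C + 3).
  assert (Hlam : 0 <= lam) by (unfold lam; assert (H := Rabs_pos C); lra).
  assert (Hinit0 : forall y, 0 <= y -> 0 <= w 0 y) by (intros y Hy; rewrite Hinit; auto).
  assert (Hbd0 : forall t, 0 <= t <= T -> 0 <= w t 0).
  { intros t Ht; rewrite Hbd by auto. assert (H := HU t Ht); lra. }
  destruct (exists_weighted_negative_min T w lam t1 y1 Hlam Hwc Hinit0 Hbd0 Hdecay
    ltac:(lra) ltac:(lra) Hneg) as [t0 [y0 [Ht0 [Hy0 [HW Hmin]]]]].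
  assert (Hin0 : in_HT T t0 y0) by (split; lra).
  assert (Hwt0 : wt t0 y0 <= lam * w t0 y0).
  { apply (derive_le_of_left_min_weighted (fun s => w s y0) t0 _ y0 lam t0);
      [apply Hwt, Hin0 | lra | intros s Hs; apply Hmin; lra]. }
  assert (Hspace : wy t0 y0 = - w t0 y0 /\ w t0 y0 <= wyy t0 y0).
  { apply (derive_of_local_min_weighted (fun y => w t0 y) (wy t0) y0 _ (lam * t0) y0);
      [lra | intros s Hs; apply Hwy; split; lra | apply Hwyy, Hin0 |].
    intros s Hs; apply Hmin; lra. }
  destruct Hspace as [Hwy0 Hwyy0].
  destruct (Heq t0 y0 Hin0) as [A [B [HA [HB HEq]]]].
  assert (HUt0 := HU t0 ltac:(lra)).
  assert (HAC : A <= Rabs C).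
  { apply (integral_eq_le_of_Rabs_mul_exp_le (fun z => w t0 z) (U t0) C y0); auto; [lra |].
    intros x Hx. apply HC. split; lra. }
  assert (HWB : w t0 y0 <= B).
  { apply (improper_integral_ge_of_weighted_min (fun z => w t0 z) y0 (lam * t0)); [lra | | exact HB].
    intros x Hx. apply Hmin; lra. }
  rewrite Hwy0 in HEq.
  assert (Hwt_ge : w t0 y0 ^ 2 + (Rabs C + 2) * w t0 y0 <= wt t0 y0) by nra.
  unfold lam in Hwt0. nra.
Qed.
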